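(* Let $c\in K$ and let $P\in W[x]$ be nonzero, written (uniquely) as \[P=\sum_{i=r}^{N}(x-c)^i p_i(\vartheta_c),\qquad p_i\in K[t],\ p_r\neq 0,\ r,N\in\mathbb Z,\] and set $p_j=0$ for $j>N$. Let $s$ be a positive integer. Then $(x-c)^{-s}P$ (product in $W(x)$) lies in $W[x]$ if and only if either $r-s\ge 0$, or, with $m=s-r>0$, \[p_{r+k}(j)=0\quad\text{for all }0\le k\le m-1\text{ and all }0\le j\le m-1-k,\] i.e. $p_r(0)=\dots=p_r(m-1)=0$, $p_{r+1}(0)=\dots=p_{r+1}(m-2)=0$, $\dots$, $p_{r+m-1}(0)=0$.
   Context: $K$ is an algebraically closed field of characteristic $0$. $W[x]$ is the Weyl algebra, the $K$-algebra generated by $x$ and $\partial=d/dx$ with $[x,\partial]=-1$; $W(x)=K(x)[\partial]$. $\vartheta_c=(x-c)\partial$. *)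

From HB Require Import structures.
From mathcomp Require Import all_boot all_order all_algebra.
Set Implicit Arguments. Unset Strict Implicit. Unset Printing Implicit Defensive.
Import GRing.Theory.
Local Open Scope ring_scope.
Notation "x %:F" := (@FracField.tofrac _ x) : ring_scope.

Definition ratfun (K : fieldType) := {fraction {poly K}}.

Definition rderiv (K : fieldType) (f : ratfun K) : ratfun K :=
  let q := repr f in
  ((\n_q)^`() * \d_q - \n_q * (\d_q)^`())%:F / ((\d_q) ^+ 2)%:F.

(* W(x) = K(x)[d] : an operator sum_i a_i(x) d^i is stored as the
   polynomial (in the variable d) with coefficients a_i in K(x),
   coefficients written on the left. *)
Definition Wop (K : fieldType) := {poly ratfun K}.

(* product in W(x):  (a d^i)(b d^j) = a sum_k C(i,k) b^(k) d^(i+j-k) *)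
Definition wmul (K : fieldType) (A B : Wop K) : Wop K :=
  \sum_(i < size A) \sum_(j < size B) \sum_(k < i.+1)
     (A`_i * ('C(i, k))%:R * iter k (@rderiv K) B`_j) *: 'X^(i + j - k).

Definition wpow (K : fieldType) (A : Wop K) (n : nat) : Wop K :=
  iter n (wmul A) 1.

Definition wfun (K : fieldType) (f : ratfun K) : Wop K := f%:P.

Definition xmc (K : fieldType) (c : K) : ratfun K := ('X - c%:P)%:F.

Definition theta (K : fieldType) (c : K) : Wop K := xmc c *: 'X.

Definition peval_theta (K : fieldType) (c : K) (p : {poly K}) : Wop K :=
  \sum_(k < size p) ((p`_k)%:P)%:F *: wpow (theta c) k.

Definition inWx (K : fieldType) (A : Wop K) : Prop :=
  forall i : nat, exists q : {poly K}, A`_i = q%:F.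

From HB Require Import structures.
From mathcomp Require Import all_boot all_order all_algebra.
From mathcomp Require Import ring.
Set Implicit Arguments. Unset Strict Implicit. Unset Printing Implicit Defensive.
Import Order.TTheory GRing.Theory Num.Theory.
Local Open Scope ring_scope.

(* Since theta_c^l = sum_j S(l, j) (x - c)^j d^j with S the Stirling numbers of
   the second kind, p(theta_c) = sum_j a_j(p) (x - c)^j d^j where a_j(p) are the
   coordinates of p in the falling factorial basis t(t-1)...(t-j+1).  Hence the
   coefficient of d^j in (x - c)^-s P is the Laurent polynomial
   sum_k a_j(p_(r+k)) (x - c)^(r+k+j-s), which lies in K[x] iff
   a_j(p_(r+k)) = 0 whenever k + j < s - r.  In characteristic 0 the evaluations
   p(0), ..., p(n-1) are a unitriangular transform of a_0(p), ..., a_(n-1)(p), so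
   these vanishing conditions are exactly the root conditions of the statement. *)

Lemma rderiv_tofrac (K : fieldType) (q : {poly K}) :
  rderiv (q%:F : ratfun K) = (q^`())%:F.
Proof.
rewrite /rderiv.
have n_eq : \n_(repr (q%:F : ratfun K)) = \d_(repr (q%:F : ratfun K)) * q.
  have := equivf_l (Ratio q 1).
  by rewrite !numden_Ratio ?oner_neq0 // mulr1; unlock tofrac.
rewrite n_eq; set d := \d_(repr _).
have d_neq0 : d != 0 by apply: denom_ratioP.
have -> : (d * q)^`() * d - d * q * d^`() = d ^+ 2 * q^`().
  by rewrite derivM; ring.
by rewrite rmorphM /= mulrC mulKf // tofrac_eq0 expf_neq0.
Qed.

Lemma rderiv0 (K : fieldType) : rderiv (0 : ratfun K) = 0.
Proof. by rewrite -(rmorph0 (@FracField.tofrac _)) rderiv_tofrac deriv0 rmorph0. Qed.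

Lemma wmul_wfunl (K : fieldType) (f : ratfun K) (B : Wop K) :
  wmul (wfun f) B = f *: B.
Proof.
rewrite /wmul /wfun; have [->|f_neq0] := eqVneq f 0.
  by rewrite size_poly0 big_ord0 scale0r.
rewrite size_polyC f_neq0 big_ord1 -[in RHS](coefK B) poly_def scaler_sumr.
apply: eq_bigr => j _.
by rewrite big_ord1 coefC /= scalerA subn0 add0n mulr1.
Qed.

Lemma xmc_neq0 (K : fieldType) (c : K) : xmc c != 0.
Proof. by rewrite /xmc tofrac_eq0 polyXsubC_eq0. Qed.

Lemma rderiv_xmc (K : fieldType) (c : K) (j n : nat) :
  rderiv (xmc c ^+ j *+ n) = xmc c ^+ j.-1 *+ (j * n).
Proof.
rewrite /xmc -rmorphXn -rmorphMn rderiv_tofrac derivMn deriv_exp derivXsubC.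
by rewrite mul1r -mulrnA rmorphMn rmorphXn mulnC.
Qed.

Lemma wmul_thetal (K : fieldType) (c : K) (B : Wop K) :
  wmul (theta c) B = xmc c *: ('X * B + \poly_(j < size B) rderiv B`_j).
Proof.
rewrite /wmul /theta size_scale ?xmc_neq0 // size_polyX big_ord_recl big1; last first.
  move=> j _; rewrite big1 // => k _.
  by rewrite coefZ coefX /= mulr0 !mul0r scale0r.
rewrite add0r big_ord1 -[in 'X * B](coefK B) !poly_def mulr_sumr -big_split.
rewrite scaler_sumr; apply: eq_bigr => j _.
rewrite big_ord_recr big_ord1 /= coefZ coefX /= !mulr1 scalerDr.
by rewrite -!scalerAr -exprS !scalerA /bump /= subn0 add1n subSS subn0.
Qed.

Fixpoint stirling2 (l j : nat) : nat :=
  if l is l'.+1 then ((if j is j'.+1 then stirling2 l' j' else 0) + j * stirling2 l' j)%N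
  else (j == 0)%N.

Lemma stirling2_small (l j : nat) : (l < j)%N -> stirling2 l j = 0%N.
Proof. by elim: l j => [|l IH] [|j] //= lt_lj; rewrite !IH ?muln0 // ltnW. Qed.

Lemma ffactS_add_mul (i j : nat) : (i ^_ j.+1 + j * i ^_ j = i * i ^_ j)%N.
Proof.
rewrite ffactnSr; have [le_ji|lt_ij] := leqP j i.
  by rewrite mulnC -mulnDl subnK // mulnC.
by rewrite ffact_small // !muln0.
Qed.

Lemma sum_stirling2_ffact (l i B : nat) : (l < B)%N ->
  (\sum_(j < B) stirling2 l j * i ^_ j)%N = (i ^ l)%N.
Proof.
elim: l B => [|l IH] [|B] // lt_lB.
  by rewrite big_ord_recl /= ffactn0 big1.
under eq_bigr do rewrite /= mulnDl.
rewrite big_split /= big_ord_recl /= mul0n add0n big_ord_recr /=.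
rewrite stirling2_small // muln0 mul0n addn0 -big_split /=.
rewrite (eq_bigr (fun j : 'I_B => i * (stirling2 l j * i ^_ j))%N); last first.
  move=> j _; rewrite /bump /= add0n mulnCA (mulnC j) -mulnA -mulnDr.
  by rewrite ffactS_add_mul mulnCA.
by rewrite -big_distrr /= IH // expnS.
Qed.

Lemma coef_wpow_theta (K : fieldType) (c : K) (l j : nat) :
  (wpow (theta c) l)`_j = xmc c ^+ j *+ stirling2 l j.
Proof.
elim: l j => [|l IH] j.
  by rewrite /wpow /= coef1; case: j.
rewrite /wpow iterS -/(wpow _ l) wmul_thetal coefZ coefD coefXM coef_poly.
have -> : (if (j < size (wpow (theta c) l))%N then rderiv (wpow (theta c) l)`_j else 0)
    = rderiv (wpow (theta c) l)`_j.
  by case: ltnP => // ?; rewrite nth_default // rderiv0.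
rewrite !IH rderiv_xmc; case: j => [|j] /=; first by rewrite add0r mulr0n mulr0.
by rewrite -mulrnDr mulrnAr -exprS.
Qed.

(* The coordinates of [q] in the falling factorial basis [t^_j]. *)
Definition ffact_coef (R : nzRingType) (q : {poly R}) (j : nat) : R :=
  \sum_(l < size q) q`_l *+ stirling2 l j.

Lemma ffact_coef0 (R : nzRingType) (j : nat) : ffact_coef (0 : {poly R}) j = 0.
Proof. by rewrite /ffact_coef size_poly0 big_ord0. Qed.

Lemma coef_peval_theta (K : fieldType) (c : K) (q : {poly K}) (j : nat) :
  (peval_theta c q)`_j = ((ffact_coef q j)%:P)%:F * xmc c ^+ j.
Proof.
rewrite /peval_theta /ffact_coef coef_sum !rmorph_sum mulr_suml.
apply: eq_bigr => l _.
by rewrite coefZ coef_wpow_theta !rmorphMn /= mulrnAl mulrnAr.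
Qed.

Lemma horner_ffact_coef (R : comNzRingType) (q : {poly R}) (i B : nat) :
  (size q <= B)%N -> q.[i%:R] = \sum_(j < B) ffact_coef q j * (i ^_ j)%:R.
Proof.
move=> le_qB; rewrite horner_coef /ffact_coef.
under [RHS]eq_bigr do rewrite mulr_suml.
rewrite exchange_big /=; apply: eq_bigr => l _.
rewrite -natrX -(sum_stirling2_ffact i (leq_trans (ltn_ord l) le_qB)).
rewrite natr_sum mulr_sumr; apply: eq_bigr => j _.
by rewrite natrM mulrA !mulr_natr.
Qed.

(* Unitriangularity: [q.[i%:R] = ffact_coef q i * i`! + \sum_(j < i) ffact_coef q j * i ^_ j]. *)
Lemma ffact_coef_eq0P (K : idomainType) (hK : [pchar K] =i pred0)
    (q : {poly K}) (n : nat) :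
  (forall j, (j < n)%N -> ffact_coef q j = 0) <->
  (forall i, (i < n)%N -> q.[i%:R] = 0).
Proof.
set B := maxn (size q) n; have le_qB : (size q <= B)%N := leq_maxl _ _.
split=> [qA0 i lt_in|q_root].
  rewrite (horner_ffact_coef i le_qB) big1 // => j _.
  have [lt_jn|le_nj] := ltnP j n; first by rewrite qA0 // mul0r.
  by rewrite ffact_small ?mulr0 // (leq_trans lt_in le_nj).
elim/ltn_ind => i IH lt_in; have lt_iB : (i < B)%N := leq_trans lt_in (leq_maxr _ _).
have := q_root i lt_in; rewrite (horner_ffact_coef i le_qB) (bigD1 (Ordinal lt_iB)) //=.
rewrite big1 ?addr0 => [|j /eqP ne_ji]; last first.
  have [lt_ji|lt_ij|eq_ji] := ltngtP j i.
  - by rewrite IH ?mul0r // (ltn_trans lt_ji lt_in).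
  - by rewrite ffact_small ?mulr0.
  - by case: ne_ji; apply: val_inj.
move/eqP; rewrite ffactnn mulf_eq0 => /orP[/eqP //|].
by move/(pcharf0P K): hK => ->; rewrite eqn0Ngt fact_gt0.
Qed.

Lemma expansion_XsubC_mul_coef_eq0 (R : comNzRingType) (c : R) (a : nat -> R)
    (L M : nat) (q : {poly R}) :
  \sum_(k < L) a k *: ('X - c%:P) ^+ k = q * ('X - c%:P) ^+ M ->
  forall k, (k < L)%N -> (k < M)%N -> a k = 0.
Proof.
move=> /(congr1 (comp_poly ('X + c%:P))) + k lt_kL lt_kM.
have shiftXsubC : ('X - c%:P) \Po ('X + c%:P) = 'X.
  by rewrite comp_polyB comp_polyX comp_polyC addrK.
rewrite linear_sum comp_polyM rmorphXn /= shiftXsubC.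
under eq_bigr do rewrite linearZ /= rmorphXn /= shiftXsubC.
move=> /(congr1 (fun p : {poly R} => p`_k)); rewrite coefMXn lt_kM coef_sum.
rewrite (bigD1 (Ordinal lt_kL)) //= coefZ coefXn eqxx mulr1 big1 ?addr0 // => j ne_jk.
have ne_jk_nat : (j != k :> nat) := ne_jk.
by rewrite coefZ coefXn eq_sym (negbTE ne_jk_nat) mulr0.
Qed.

Lemma xmc_exprz_nat (K : fieldType) (c : K) (n : nat) :
  xmc c ^ n%:Z = ((('X - c%:P) ^+ n)%:F : ratfun K).
Proof. by rewrite -exprnP /xmc rmorphXn. Qed.

Lemma laurent_polyP (K : fieldType) (c : K) (t : int) (L : nat) (a : nat -> K) :
  (exists q : {poly K}, \sum_(k < L) ((a k)%:P)%:F * xmc c ^ (t + k%:Z) = q%:F) <->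
  (forall k, (k < L)%N -> t + k%:Z < 0 -> a k = 0).
Proof.
split=> [[q sum_q] k lt_kL lt_tk0|principal0].
  have t_lt0 : t < 0 by apply: le_lt_trans lt_tk0; rewrite lerDl.
  set M := absz t; have t_eq : t = - M%:Z by rewrite /M ltz0_abs // opprK.
  apply: (@expansion_XsubC_mul_coef_eq0 _ c a L M q) => //; last first.
    by move: lt_tk0; rewrite t_eq addrC subr_lt0 ltz_nat.
  apply/eqP; rewrite -tofrac_eq rmorphM rmorph_sum /= -sum_q mulr_suml.
  apply/eqP/eq_bigr => j _; rewrite -mul_polyC rmorphM /= -mulrA; congr (_ * _).
  rewrite -!xmc_exprz_nat -expfzDr ?xmc_neq0 //.
  by rewrite t_eq addrAC addNr add0r.
exists (\sum_(k < L) (a k)%:P * ('X - c%:P) ^+ absz (t + k%:Z)).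
rewrite rmorph_sum; apply: eq_bigr => k _.
have [tk_lt0|tk_ge0] := ltP (t + k%:Z) 0; first by rewrite principal0 // !rmorph0 !mul0r.
by rewrite rmorphM /= -xmc_exprz_nat gez0_abs.
Qed.

Lemma coef_scale_sum_theta (K : fieldType) (c : K) (t r : int) (L : nat)
    (q : nat -> {poly K}) (j : nat) :
  (xmc c ^ t *: \sum_(k < L) wmul (wfun (xmc c ^ (r + k%:Z))) (peval_theta c (q k)))`_j
  = \sum_(k < L) ((ffact_coef (q k) j)%:P)%:F * xmc c ^ (t + r + j%:Z + k%:Z).
Proof.
rewrite coefZ coef_sum mulr_sumr; apply: eq_bigr => k _.
rewrite wmul_wfunl coefZ coef_peval_theta exprnP mulrCA (mulrCA (xmc c ^ t)).
by rewrite mulrCA -!expfzDr ?xmc_neq0 //; congr (_ * (_ ^ _)); ring.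
Qed.

Lemma inWx_scale_sum_theta (K : fieldType) (c : K) (t r : int) (L : nat)
    (q : nat -> {poly K}) :
  inWx (xmc c ^ t *: \sum_(k < L) wmul (wfun (xmc c ^ (r + k%:Z))) (peval_theta c (q k)))
  <-> (forall k j : nat, (k < L)%N -> t + r + (k + j)%:Z < 0 -> ffact_coef (q k) j = 0).
Proof.
have exponentE k j : t + r + j%:Z + k%:Z = t + r + (k + j)%:Z by rewrite PoszD; ring.
split=> [inW k j lt_kL|coef0 j].
  have [q' sum_q'] := inW j; rewrite coef_scale_sum_theta in sum_q'.
  have := (laurent_polyP c _ L (fun k => ffact_coef (q k) j)).1 (ex_intro _ q' sum_q').
  by rewrite -exponentE; apply.
rewrite coef_scale_sum_theta; apply/(laurent_polyP c _ L (fun k => ffact_coef (q k) j)) => k lt_kL.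
by rewrite exponentE; apply: coef0.
Qed.

Lemma ffact_coef_eq0_below (K : idomainType) (hK : [pchar K] =i pred0)
    (q : nat -> {poly K}) (u : int) :
  (forall k j : nat, (k + j)%:Z < u -> ffact_coef (q k) j = 0) <->
  (forall k j : nat, (k + j)%:Z < u -> (q k).[j%:R] = 0).
Proof.
have cut k : exists n : nat, forall j : nat, ((k + j)%:Z < u) = (j < n)%N.
  have [uk_ge0|uk_lt0] := leP 0 (u - k%:Z).
    by exists (absz (u - k%:Z)) => j; rewrite -ltz_nat gez0_abs // ltrBrDl PoszD.
  exists 0%N => j; rewrite ltn0; apply/negbTE; rewrite -leNgt.
  by rewrite subr_lt0 in uk_lt0; apply: le_trans (ltW uk_lt0) _; rewrite PoszD lerDl.
split=> vanish k; have [n cutE] := cut k; move=> j; rewrite cutE; move: j.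
  by apply/(ffact_coef_eq0P hK) => j; rewrite -cutE; apply: vanish.
by apply/(ffact_coef_eq0P hK) => j; rewrite -cutE; apply: vanish.
Qed.

Theorem mainTheorem2 (K : closedFieldType) (hK : [pchar K] =i pred0)
  (c : K) (P : Wop K) (hPW : inWx P) (hP0 : P != 0)
  (r N : int) (p : int -> {poly K})
  (hpr : p r != 0) (hpN : forall j : int, N < j -> p j = 0)
  (hdec : P = \sum_(k < (absz (N - r)).+1)
                 wmul (wfun (xmc c ^ (r + k%:Z))) (peval_theta c (p (r + k%:Z))))
  (s : nat) (hs : (0 < s)%N) :
  inWx (wmul (wfun (xmc c ^ (- s%:Z))) P) <->
  (0 <= r - s%:Z \/
   forall k j : nat, (k + j)%:Z < s%:Z - r -> (p (r + k%:Z)).[j%:R] = 0).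
Proof.
have r_le_N : r <= N by rewrite leNgt; apply/negP => /hpN pr0; rewrite pr0 eqxx in hpr.
have p_out k : ((absz (N - r)).+1 <= k)%N -> p (r + k%:Z) = 0.
  move=> lt_Nk; apply: hpN; have Nr_ge0 : 0 <= N - r by rewrite subr_ge0.
  by rewrite -ltrBlDl -(gez0_abs Nr_ge0) ltz_nat.
have below k j : (- s%:Z + r + (k + j)%:Z < 0) = ((k + j)%:Z < s%:Z - r).
  by rewrite -subr_gt0 -[RHS]subr_gt0; congr (0 < _); ring.
rewrite wmul_wfunl hdec (inWx_scale_sum_theta c _ r _ (fun k => p (r + k%:Z))).
transitivity (forall k j : nat, (k + j)%:Z < s%:Z - r -> ffact_coef (p (r + k%:Z)) j = 0).
  split=> [coef0 k j lt_kj|coef0 k j _]; last by rewrite below; apply: coef0.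
  have [lt_kL|le_Lk] := ltnP k (absz (N - r)).+1; last by rewrite p_out // ffact_coef0.
  by apply: coef0; rewrite ?below.
rewrite (ffact_coef_eq0_below hK (fun k => p (r + k%:Z))).
have [rs_ge0|_] := leP 0 (r - s%:Z).
  split=> [_|_ k j lt_kj]; first by left.
  exfalso; move: rs_ge0.
  by rewrite leNgt -oppr_gt0 opprB (le_lt_trans _ lt_kj).
by split=> [?|[]//]; right.
Qed.
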